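(* Let $F$ be a cumulative distribution function on $[0,\infty)$ that has a density $f$ and a finite mean, and suppose $\mathsf{OPT\text{-}GFT}(F)>0$. Let $B,S$ be independent with common distribution $F$, and let $p\sim F$ be drawn independently of $(B,S)$. Then \[\mathbb{E}_{p\sim F}\big[\mathsf{GFT}(p,F)\big]=\tfrac12\,\mathsf{OPT\text{-}GFT}(F)\] exactly, for every such $F$.
   Context: Symmetric bilateral trade: the buyer's value $B$ and the seller's value $S$ are independent draws from the same distribution $F$. A fixed-price mechanism posts a price $p$; trade occurs iff $B\ge p> S$ (for continuous $F$ the tie-breaking convention is immaterial). Gains from trade of price $p$: $\mathsf{GFT}(p,F)=\mathbb{E}[(B-S)\mathbf 1_{B\ge p>S}]$. Optimal gains from trade: $\mathsf{OPT\text{-}GFT}(F)=\mathbb{E}[(B-S)\mathbf 1_{B>S}]$. *)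

From mathcomp Require Import all_boot all_order all_algebra.
From mathcomp Require Import all_classical all_reals all_analysis.
Set Implicit Arguments. Unset Strict Implicit. Unset Printing Implicit Defensive.
Import Order.TTheory GRing.Theory Num.Theory.
Local Open Scope classical_set_scope.
Local Open Scope ring_scope.
Local Open Scope ereal_scope.

(* Gains from trade of posted price p when B, S are i.i.d. with density f:
   GFT(p,F) = E[(B - S) 1_{B >= p > S}]
            = \int_b \int_s (b - s) 1_{b >= p > s} f(b) f(s) ds db. *)
Definition GFT (R : realType) (f : R -> R) (p : R) : \bar R :=
  \int[@lebesgue_measure R]_b \int[@lebesgue_measure R]_s
     (if ((p <= b) && (s < p))%R then ((b - s) * f b * f s)%R else 0%R)%:E.

Definition OPT_GFT (R : realType) (f : R -> R) : \bar R :=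
  \int[@lebesgue_measure R]_b \int[@lebesgue_measure R]_s
     (if (s < b)%R then ((b - s) * f b * f s)%R else 0%R)%:E.

Definition expected_random_price_GFT (R : realType) (f : R -> R) : \bar R :=
  \int[@lebesgue_measure R]_p (GFT f p * (f p)%:E).

From mathcomp Require Import all_boot all_order all_algebra.
From mathcomp Require Import all_classical all_reals all_analysis.
From mathcomp Require Import measurable_realfun lra ring.
Set Implicit Arguments. Unset Strict Implicit.
Import Order.TTheory GRing.Theory Num.Theory.
Local Open Scope classical_set_scope.
Local Open Scope ring_scope.
Local Open Scope ereal_scope.

(* Write X, Y, Z for three i.i.d. values with density f and let
   w(x, y, z) = f x * f y * f z.  Both sides are triple integrals against w:
     E[GFT(p)] = E[(X - Y) 1{Y < Z <= X}]      (buyer X, seller Y, price Z),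
     OPT-GFT  = E[(X - Y) 1{Y < X}]            (Z is a dummy variable).
   Splitting OPT-GFT according to the position of Z gives three pieces:
     Z < Y < X,   Y <= Z < X,   Y < X <= Z.
   The middle one is E[GFT(p)] (the boundary cases Z = X, Z = Y are null
   sets), and after relabelling variables the outer two become
   E[(X - Z) 1{Y < Z <= X}] and E[(Z - Y) 1{Y < Z <= X}], which add up to
   E[(X - Y) 1{Y < Z <= X}] = E[GFT(p)] again.  Hence OPT-GFT = 2 E[GFT(p)]. *)

Section triple_integral.
Context d (T : measurableType d) (R : realType).
Variable mu : {sigma_finite_measure set T -> \bar R}.

Definition iint3 (h : T -> T -> T -> \bar R) : \bar R :=
  \int[mu]_x \int[mu]_y \int[mu]_z h x y z.

Definition measurable3 (h : T -> T -> T -> \bar R) : Prop :=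
  measurable_fun setT (fun v : T * T * T => h v.1.1 v.1.2 v.2).

Lemma measurable_coord1 : measurable_fun setT (fun v : T * T * T => v.1.1).
Proof. exact: measurableT_comp measurable_fst measurable_fst. Qed.

Lemma measurable_coord2 : measurable_fun setT (fun v : T * T * T => v.1.2).
Proof. exact: measurableT_comp measurable_snd measurable_fst. Qed.

Lemma measurable_coord3 : measurable_fun setT (fun v : T * T * T => v.2).
Proof. exact: measurable_snd. Qed.

Lemma measurable3_swap12 h : measurable3 h -> measurable3 (fun x y z => h y x z).
Proof.
move=> mh; apply: (measurableT_comp (g := fun v => (v.1.2, v.1.1, v.2)) mh).
apply: measurable_fun_pair; last exact: measurable_coord3.
by apply: measurable_fun_pair; [exact: measurable_coord2|exact: measurable_coord1].
Qed.

Lemma measurable3_swap23 h : measurable3 h -> measurable3 (fun x y z => h x z y).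
Proof.
move=> mh; apply: (measurableT_comp (g := fun v => (v.1.1, v.2, v.1.2)) mh).
apply: measurable_fun_pair; last exact: measurable_coord2.
by apply: measurable_fun_pair; [exact: measurable_coord1|exact: measurable_coord3].
Qed.

Lemma iint3_ext h1 h2 : (forall x y z, h1 x y z = h2 x y z) -> iint3 h1 = iint3 h2.
Proof. by move=> e; congr iint3; apply/funext=> x; apply/funext=> y; apply/funext. Qed.

Section nonneg_measurable.
Variable h : T -> T -> T -> \bar R.
Hypotheses (mh : measurable3 h) (h0 : forall x y z, 0 <= h x y z).

Lemma measurable3_int_z : measurable_fun setT (fun v : T * T => \int[mu]_z h v.1 v.2 z).
Proof. exact: measurable_fun_fubini_tonelli_F mh (fun v => h0 _ _ _). Qed.

Lemma measurable3_int_yz : measurable_fun setT (fun x => \int[mu]_y \int[mu]_z h x y z).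
Proof.
apply: (measurable_fun_fubini_tonelli_F (fun v : T * T => \int[mu]_z h v.1 v.2 z)).
  exact: measurable3_int_z.
by move=> v; apply: integral_ge0 => z _.
Qed.

Lemma measurable3_sectionz x y : measurable_fun setT (h x y).
Proof. exact: measurableT_comp mh (pair1_measurable (x, y)). Qed.

Lemma measurable3_sectiony x : measurable_fun setT (fun y => \int[mu]_z h x y z).
Proof. exact: measurableT_comp measurable3_int_z (pair1_measurable x). Qed.

Lemma measurable3_sectionyz x : measurable_fun setT (fun v : T * T => h x v.1 v.2).
Proof.
apply: (measurableT_comp (g := fun v : T * T => (x, v.1, v.2)) mh).
apply: measurable_fun_pair => //=.
by apply: measurable_fun_pair => //=; exact: measurable_fst.
Qed.

Lemma iint3_ge0 : 0 <= iint3 h.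
Proof. by apply: integral_ge0 => x _; apply: integral_ge0 => y _; exact: integral_ge0. Qed.

Lemma iint3_swap12 : iint3 h = iint3 (fun x y z => h y x z).
Proof.
exact: (fubini_tonelli (fun v : T * T => \int[mu]_z h v.1 v.2 z))
  measurable3_int_z (fun v => integral_ge0 _ (fun z _ => h0 _ _ _)).
Qed.

Lemma iint3_swap23 : iint3 h = iint3 (fun x y z => h x z y).
Proof.
apply: eq_integral => x _.
exact: (fubini_tonelli (fun v : T * T => h x v.1 v.2))
  (measurable3_sectionyz x) (fun v => h0 _ _ _).
Qed.

End nonneg_measurable.

Lemma iint3_swap13 h : measurable3 h -> (forall x y z, 0 <= h x y z) ->
  iint3 h = iint3 (fun x y z => h z y x).
Proof.
move=> mh h0; have mh1 := measurable3_swap12 mh.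
have mh2 := measurable3_swap23 mh1.
rewrite (iint3_swap12 mh h0) (iint3_swap23 mh1 (fun x y z => h0 _ _ _)).
exact: (iint3_swap12 mh2 (fun x y z => h0 _ _ _)).
Qed.

Lemma iint3D h1 h2 : measurable3 h1 -> measurable3 h2 ->
  (forall x y z, 0 <= h1 x y z) -> (forall x y z, 0 <= h2 x y z) ->
  iint3 (fun x y z => h1 x y z + h2 x y z) = iint3 h1 + iint3 h2.
Proof.
move=> m1 m2 p1 p2; rewrite /iint3 -ge0_integralD//; last 4 first.
- by move=> x _; apply: integral_ge0 => y _; exact: integral_ge0.
- exact: measurable3_int_yz.
- by move=> x _; apply: integral_ge0 => y _; exact: integral_ge0.
- exact: measurable3_int_yz.
apply: eq_integral => x _; rewrite -ge0_integralD//; last 4 first.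
- by move=> y _; exact: integral_ge0.
- exact: measurable3_sectiony.
- by move=> y _; exact: integral_ge0.
- exact: measurable3_sectiony.
by apply: eq_integral => y _; rewrite ge0_integralD//; exact: measurable3_sectionz.
Qed.

End triple_integral.

Section lebesgue_null_diagonal.
Context (R : realType).
Local Notation mu := (@lebesgue_measure R).

(* Points are Lebesgue-null: changing an integrand at one point does not
   change its integral. *)
Lemma integral_eq_off_point (g1 g2 : R -> \bar R) (a : R) :
  measurable_fun setT g1 -> measurable_fun setT g2 ->
  (forall z, z != a -> g1 z = g2 z) -> \int[mu]_z g1 z = \int[mu]_z g2 z.
Proof.
move=> m1 m2 g12; have mD : measurable ([set: R] `\ a) by exact: measurableD.
rewrite -(@integral_setD1 _ g1 a setT)//; last exact: measurable_funS m1.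
rewrite -(@integral_setD1 _ g2 a setT)//; last exact: measurable_funS m2.
by apply: eq_integral => z; rewrite inE => -[_ /eqP]; exact: g12.
Qed.

Lemma iint3_eq_off_graph (h1 h2 : R -> R -> R -> \bar R) (a : R -> R -> R) :
  measurable3 h1 -> measurable3 h2 ->
  (forall x y z, z != a x y -> h1 x y z = h2 x y z) -> iint3 mu h1 = iint3 mu h2.
Proof.
move=> m1 m2 h12; apply: eq_integral => x _; apply: eq_integral => y _.
apply: (integral_eq_off_point (a := a x y)); [exact: measurable3_sectionz..|].
exact: h12.
Qed.

End lebesgue_null_diagonal.

Lemma half_double (R : realType) (a : \bar R) : 0 <= a -> a = 2^-1%:E * (a + a).
Proof.
case: a => [r _| _ |//].
  by rewrite -EFinD -EFinM; congr EFin; field.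
by rewrite /= mulry gtr0_sg ?mul1e // invr_gt0 ltr0n.
Qed.

Section weighted_by_density.
Context (R : realType) (f : R -> R).
Hypotheses (f_meas : measurable_fun setT f) (f_ge0 : forall x, (0 <= f x)%R).
Local Notation mu := (@lebesgue_measure R).

(* The integrand of E[g(X, Y, Z)] for X, Y, Z i.i.d. with density f. *)
Definition weighted (g : R -> R -> R -> R) (x y z : R) : \bar R :=
  (g x y z * (f x * f y * f z))%:E.

Definition kernel3 (g : R -> R -> R -> R) : Prop :=
  measurable3 (fun x y z => (g x y z)%:E) /\ forall x y z, (0 <= g x y z)%R.

Lemma kernel3D g1 g2 : kernel3 g1 -> kernel3 g2 ->
  kernel3 (fun x y z => g1 x y z + g2 x y z)%R.
Proof.
move=> [m1 p1] [m2 p2]; split; last by move=> x y z; rewrite addr_ge0.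
apply/measurable_EFinP; apply: measurable_funD; exact/measurable_EFinP.
Qed.

Lemma kernel3_swap12 g : kernel3 g -> kernel3 (fun x y z => g y x z).
Proof. by move=> [mg g0]; split; [exact: measurable3_swap12|move=> x y z]. Qed.

Section one_kernel.
Variable g : R -> R -> R -> R.
Hypothesis kg : kernel3 g.

Lemma measurable3_weighted : measurable3 (weighted g).
Proof.
case: kg => /measurable_EFinP mg _; apply/measurable_EFinP; apply: measurable_funM => //.
apply: measurable_funM; [apply: measurable_funM|];
  apply: measurableT_comp f_meas _;
  [exact: measurable_coord1|exact: measurable_coord2|exact: measurable_coord3].
Qed.

Lemma weighted_ge0 x y z : 0 <= weighted g x y z.
Proof. by case: kg => _ g0; rewrite lee_fin !mulr_ge0. Qed.

(* Since the density f x * f y * f z is symmetric, relabelling the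
   variables of the integral only relabels the variables of the kernel. *)
Lemma iint3_weighted_swap12 :
  iint3 mu (weighted g) = iint3 mu (weighted (fun x y z => g y x z)).
Proof.
rewrite (iint3_swap12 mu measurable3_weighted weighted_ge0).
by apply: iint3_ext => x y z; rewrite /weighted; congr EFin; ring.
Qed.

Lemma iint3_weighted_swap23 :
  iint3 mu (weighted g) = iint3 mu (weighted (fun x y z => g x z y)).
Proof.
rewrite (iint3_swap23 mu measurable3_weighted weighted_ge0).
by apply: iint3_ext => x y z; rewrite /weighted; congr EFin; ring.
Qed.

Lemma iint3_weighted_swap13 :
  iint3 mu (weighted g) = iint3 mu (weighted (fun x y z => g z y x)).
Proof.
rewrite (iint3_swap13 mu measurable3_weighted weighted_ge0).
by apply: iint3_ext => x y z; rewrite /weighted; congr EFin; ring.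
Qed.

Lemma iint3_weighted_outer :
  iint3 mu (weighted g) =
  \int[mu]_x ((\int[mu]_y \int[mu]_z (g x y z * (f y * f z))%:E) * (f x)%:E).
Proof.
pose h x y z := (g x y z * (f y * f z))%:E.
have mh : measurable3 h.
  case: kg => /measurable_EFinP mg _; apply/measurable_EFinP.
  apply: measurable_funM => //; apply: measurable_funM;
    apply: measurableT_comp f_meas _; [exact: measurable_coord2|exact: measurable_coord3].
have h0 x y z : 0 <= h x y z by case: kg => _ g0; rewrite lee_fin !mulr_ge0.
apply: eq_integral => x _; rewrite -ge0_integralZr//; last 3 first.
- exact: (measurable3_sectiony mu mh h0 x).
- by move=> y _; apply: integral_ge0 => z _; exact: h0.
- by rewrite lee_fin.
apply: eq_integral => y _; rewrite -ge0_integralZr//; last 3 first.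
- exact: (measurable3_sectionz mh).
- by move=> z _; exact: h0.
- by rewrite lee_fin.
by apply: eq_integral => z _; rewrite /weighted -EFinM; congr EFin; ring.
Qed.

End one_kernel.

Lemma iint3_weightedD g1 g2 : kernel3 g1 -> kernel3 g2 ->
  iint3 mu (weighted (fun x y z => g1 x y z + g2 x y z)%R) =
  iint3 mu (weighted g1) + iint3 mu (weighted g2).
Proof.
move=> k1 k2; rewrite -(iint3D mu (measurable3_weighted k1) (measurable3_weighted k2)
  (weighted_ge0 k1) (weighted_ge0 k2)).
by apply: iint3_ext => x y z; rewrite /weighted -EFinD mulrDl.
Qed.

Lemma iint3_weighted_eq_off_graph (a : R -> R -> R) g1 g2 : kernel3 g1 -> kernel3 g2 ->
  (forall x y z, z != a x y -> g1 x y z = g2 x y z) ->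
  iint3 mu (weighted g1) = iint3 mu (weighted g2).
Proof.
move=> k1 k2 g12; apply: (iint3_eq_off_graph (a := a));
  [exact: measurable3_weighted..|].
by move=> x y z /g12; rewrite /weighted => ->.
Qed.

End weighted_by_density.

Section random_posted_price.
Context (R : realType).
Local Notation mu := (@lebesgue_measure R).
Local Open Scope ring_scope.

Definition between (x y z : R) : bool := (y < z) && (z <= x).

(* Gains from trade of buyer x and seller y; z is a dummy variable. *)
Definition opt_kernel (x y _ : R) : R := if y < x then x - y else 0.

Definition price_kernel (p b s : R) : R := if (p <= b) && (s < p) then b - s else 0.

Definition between_kernel (w : R -> R -> R -> R) (x y z : R) : R :=
  if between x y z then w x y z else 0.

Definition low_kernel (x y z : R) : R := if (z < y) && (y < x) then x - y else 0.
Definition mid_kernel (x y z : R) : R := if (y <= z) && (z < x) then x - y else 0.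
Definition high_kernel (x y z : R) : R := if (y < x) && (x <= z) then x - y else 0.

Ltac kernel3_tac :=
  split;
  [ apply/measurable_EFinP; repeat first
      [ apply: measurable_fun_ifT | apply: measurable_and
      | apply: measurable_fun_ltr | apply: measurable_fun_ler
      | apply: measurable_funB | exact: measurable_cst
      | exact: measurable_coord1 | exact: measurable_coord2
      | exact: measurable_coord3 ]
  | move=> x y z; case: ifPn => //; try case/andP; move=> *; lra ].

Lemma kernel3_opt : kernel3 opt_kernel.
Proof. rewrite /opt_kernel; kernel3_tac. Qed.

Lemma kernel3_price : kernel3 price_kernel.
Proof. rewrite /price_kernel; kernel3_tac. Qed.

Lemma kernel3_low : kernel3 low_kernel.
Proof. rewrite /low_kernel; kernel3_tac. Qed.

Lemma kernel3_mid : kernel3 mid_kernel.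
Proof. rewrite /mid_kernel; kernel3_tac. Qed.

Lemma kernel3_high : kernel3 high_kernel.
Proof. rewrite /high_kernel; kernel3_tac. Qed.

Lemma kernel3_spread : kernel3 (between_kernel (fun x y _ => x - y)).
Proof. rewrite /between_kernel /between; kernel3_tac. Qed.

Lemma kernel3_upper_gap : kernel3 (between_kernel (fun x _ z => x - z)).
Proof. rewrite /between_kernel /between; kernel3_tac. Qed.

Lemma kernel3_lower_gap : kernel3 (between_kernel (fun _ y z => z - y)).
Proof. rewrite /between_kernel /between; kernel3_tac. Qed.

Lemma opt_kernel_split x y z :
  opt_kernel x y z = low_kernel x y z + mid_kernel x y z + high_kernel x y z.
Proof.
rewrite /opt_kernel /low_kernel /mid_kernel /high_kernel.
by case: (ltrP y x); case: (ltrP z y); case: (ltrP z x) => /=; lra.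
Qed.

Lemma spread_split x y z :
  between_kernel (fun x y _ => x - y) x y z =
  between_kernel (fun x _ z => x - z) x y z + between_kernel (fun _ y z => z - y) x y z.
Proof. by rewrite /between_kernel; case: ifP => _; [ring|rewrite addr0]. Qed.

Section density.
Variable f : R -> R.
Hypotheses (f_meas : measurable_fun setT f) (f_ge0 : forall x, 0 <= f x).
Local Notation E g := (iint3 mu (weighted f g)).

(* Relabelling z <-> y maps the low piece to the upper gap; the boundary
   z = x is harmless since the weight x - z vanishes there. *)
Lemma iint3_low : E low_kernel = E (between_kernel (fun x _ z => x - z)).
Proof.
rewrite (iint3_weighted_swap23 f_meas f_ge0 kernel3_low); apply: iint3_ext => x y z.
rewrite /weighted /low_kernel /between_kernel /between; congr (EFin (_ * _)).
by case: (ltgtP z x) => [zx|zx|->]; rewrite ?andbT ?andbF ?subrr //; case: ifP.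
Qed.

(* The middle piece differs from the spread kernel only on z = y and z = x. *)
Lemma iint3_mid : E mid_kernel = E (between_kernel (fun x y _ => x - y)).
Proof.
pose strict (x y z : R) : R := if (y < z) && (z < x) then x - y else 0.
have kstrict : kernel3 strict by rewrite /strict; kernel3_tac.
transitivity (E strict).
  apply: (iint3_weighted_eq_off_graph f_meas (a := fun _ y => y) kernel3_mid kstrict).
  by move=> x y z zy; rewrite /mid_kernel /strict le_eqVlt eq_sym (negbTE zy).
apply: (iint3_weighted_eq_off_graph f_meas (a := fun x _ => x) kstrict kernel3_spread).
by move=> x y z zx; rewrite /strict /between_kernel /between le_eqVlt (negbTE zx).
Qed.

(* Relabelling x <-> z maps the high piece to the lower gap. *)
Lemma iint3_high : E high_kernel = E (between_kernel (fun _ y z => z - y)).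
Proof. by rewrite (iint3_weighted_swap13 f_meas f_ge0 kernel3_high). Qed.

Lemma OPT_GFT_iint3 : (\int[mu]_x (f x)%:E = 1)%E -> OPT_GFT f = E opt_kernel.
Proof.
move=> f_total; apply: eq_integral => x _; apply: eq_integral => y _.
under [RHS]eq_integral do rewrite /weighted /opt_kernel mulrA EFinM.
rewrite ge0_integralZl//; last 3 first.
- exact/measurable_EFinP.
- by move=> z _; rewrite lee_fin.
- by rewrite lee_fin mulr_ge0 ?mulr_ge0//; case: kernel3_opt => _; apply.
rewrite f_total mule1; congr EFin.
by case: ifP => _; [ring|rewrite mul0r].
Qed.

Lemma expected_GFT_iint3 : expected_random_price_GFT f = E price_kernel.
Proof.
rewrite (iint3_weighted_outer f_meas f_ge0 kernel3_price).
rewrite /expected_random_price_GFT /GFT; apply: eq_integral => p _; congr (_ * _)%E.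
apply: eq_integral => b _; apply: eq_integral => s _; rewrite /price_kernel.
by case: ifP => _; [congr EFin; ring|rewrite mul0r].
Qed.

(* Naming the buyer x, the seller y and the price z. *)
Lemma iint3_price : E price_kernel = E (between_kernel (fun x y _ => x - y)).
Proof.
rewrite (iint3_weighted_swap12 f_meas f_ge0 kernel3_price).
rewrite (iint3_weighted_swap23 f_meas f_ge0 (kernel3_swap12 kernel3_price)).
by apply: iint3_ext => x y z; rewrite /weighted /price_kernel /between_kernel /between andbC.
Qed.

Lemma opt_twice_spread : E opt_kernel =
  E (between_kernel (fun x y _ => x - y)) + E (between_kernel (fun x y _ => x - y)).
Proof.
have -> : E opt_kernel = E (fun x y z => low_kernel x y z + mid_kernel x y z + high_kernel x y z).
  by apply: iint3_ext => x y z; rewrite /weighted opt_kernel_split.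
rewrite (iint3_weightedD f_meas f_ge0 (kernel3D kernel3_low kernel3_mid) kernel3_high).
rewrite (iint3_weightedD f_meas f_ge0 kernel3_low kernel3_mid).
rewrite iint3_low iint3_mid iint3_high.
rewrite [X in _ = X + _](_ : _ = E (between_kernel (fun x _ z => x - z)) +
                                  E (between_kernel (fun _ y z => z - y))).
  exact: addeAC.
rewrite -(iint3_weightedD f_meas f_ge0 kernel3_upper_gap kernel3_lower_gap).
by apply: iint3_ext => x y z; rewrite /weighted spread_split.
Qed.

End density.

End random_posted_price.

Unset Implicit Arguments.

Theorem theorem1 (R : realType) (F f : R -> R)
  (f_meas : measurable_fun setT f)
  (f_ge0 : forall x, (0 <= f x)%R)
  (f_supp : forall x, (x < 0)%R -> f x = 0%R)
  (F_cdf : forall t, \int[@lebesgue_measure R]_(x in `]-oo, t]) (f x)%:E = (F t)%:E)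
  (f_total : \int[@lebesgue_measure R]_x (f x)%:E = 1)
  (f_mean : \int[@lebesgue_measure R]_x (x * f x)%:E < +oo)
  (opt_pos : 0 < OPT_GFT f) :
  expected_random_price_GFT f = (2^-1)%:E * OPT_GFT f.
Proof.
rewrite (expected_GFT_iint3 f_meas f_ge0) (OPT_GFT_iint3 f_meas f_ge0 f_total).
rewrite (iint3_price f_meas f_ge0) (opt_twice_spread f_meas f_ge0).
apply: half_double; apply: iint3_ge0 => x y z.
exact: (weighted_ge0 f_ge0 (kernel3_spread R) x y z).
Qed.
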